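(* Let $A$ be a finite alphabet, $w_1,\ldots,w_k,w'_1,\ldots,w'_{k'}\in A^*$, and $N=\max(|w_1|,\ldots,|w_k|,|w'_1|,\ldots,|w'_{k'}|)\ge1$. Then $\mathrm{WMIX}(w_1,\ldots,w_k)=\mathrm{WMIX}(w'_1,\ldots,w'_{k'})$ if and only if both \[\mathrm{WMIX}(w_1,\ldots,w_k)\cap A^{<N}=\mathrm{WMIX}(w'_1,\ldots,w'_{k'})\cap A^{<N}\] and \[\mathrm{Mtr}_N(\mathrm{WMIX}(w_1,\ldots,w_k))=\mathrm{Mtr}_N(\mathrm{WMIX}(w'_1,\ldots,w'_{k'})).\]
   Context: For $u,w\in A^*$, $|w|_u$ is the number of pairs $(x,y)\in A^*\times A^*$ with $xuy=w$. $\mathrm{WMIX}(w_1,\ldots,w_k)=\{w\in A^*\mid|w|_{w_1}=\cdots=|w|_{w_k}\}$. $A^{<N}$ is the set of words of length less than $N$. $\mathrm{suff}_n(w)$ is the suffix of length $n$ of $w$. A (directed) graph is $\mathcal G=(V,E)$ with $E\subseteq V\times V$. A walk is a sequence $\omega=(v_1,\ldots,v_n)\in V^n$, $n\ge1$, with $(v_i,v_{i+1})\in E$ for all $1\le i<n$; its length is $|\omega|=n-1$, its source is $v_1$ and its target is $v_n$. $V(\omega)=\{v_1,\ldots,v_n\}$. If the target of $\omega_1=(v_1,\ldots,v_m)$ equals the source of $\omega_2=(v'_1,\ldots,v'_n)$, then $\omega_1\odot\omega_2=(v_1,\ldots,v_m,v'_2,\ldots,v'_n)$. A loop is a non-empty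 walk whose source equals its target. A path is a walk whose vertices are pairwise distinct (empty walks are paths). A cycle is a loop $(v,v_1,\ldots,v_n,v)$ such that $(v,v_1,\ldots,v_n)$ is a path. $\mathcal W(\mathcal G),\mathcal P(\mathcal G),\mathcal C(\mathcal G)$ denote the sets of walks, paths and cycles. For a sequence of cycles $\Gamma=(\gamma_1,\ldots,\gamma_n)$: $|\Gamma|_\gamma=\#\{i\mid\gamma_i=\gamma\}$, $\Gamma.\gamma=(\gamma_1,\ldots,\gamma_n,\gamma)$; $\emptyset$ is the empty sequence. Decomposition $\mathrm{dec}_{\mathcal G}:\mathcal W(\mathcal G)\to\mathcal P(\mathcal G)\times\mathcal C(\mathcal G)^*$, by induction on length: $\mathrm{dec}_{\mathcal G}((v))=((v),\emptyset)$; for a walk $\omega$ with target $v$ and an edge $(v,v')$, let $(\pi,\Gamma)=\mathrm{dec}_{\mathcal G}(\omega)$ (the target of $\pi$ is $v$); if $v'\notin V(\pi)$ then $\mathrm{dec}_{\mathcal G}(\omega\odot(v,v'))=(\pi\odot(v,v'),\Gamma)$; otherwise, writing $\pi=(v_1,\ldots,v_{j-1},v',v_{j+1},\ldots,v)$, $\mathrm{dec}_{\mathcal G}(\omega\odot(v,v'))=((v_1,\ldots,v_{j-1},v'),\ \Gamma.(v',v_{j+1},\ldots,v,v'))$. Multi-trace: for $\omega\in\mathcal W(\mathcal G)$ with $(\pi_\omega,\Gamma)=\mathrm{dec}_{\mathcal G}(\omega)$, $\mathrm{mtr}(\omega):\mathcal P(\mathcal G)\cup\mathcal C(\mathcal G)\to\mathbb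 N$ is given by $\mathrm{mtr}(\omega)(\pi)=1$ if $\pi=\pi_\omega$ and $0$ for other paths $\pi$, and $\mathrm{mtr}(\omega)(\gamma)=|\Gamma|_\gamma$ for cycles $\gamma$. The $N$-dimensional de Bruijn graph $\mathcal D_N=(A^N,E)$ has vertex set $A^N$ and edge set $E=\{(av,vb)\mid a,b\in A,\ v\in A^{N-1}\}$. For a vertex $v\in A^N$ and a word $w=a_1\cdots a_m$, $\mathrm{walk}(v,w)=(v,v_1,\ldots,v_m)$ with $v_i=\mathrm{suff}_N(v\,a_1\cdots a_i)$ (for $w$ empty, $\mathrm{walk}(v,w)=(v)$). Multi-trace of a language $L\subseteq A^*$ of order $N$: $\mathrm{Mtr}_N(L)=\{\mathrm{mtr}(\mathrm{walk}(v,u))\mid v\in A^N,\ u\in A^*,\ vu\in L\}$, multi-traces taken in $\mathcal D_N$. *)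

From mathcomp Require Import all_boot.
Set Implicit Arguments. Unset Strict Implicit. Unset Printing Implicit Defensive.

Section Words.
Variable A : eqType.

(* |w|_u : number of pairs (x,y) with x u y = w; x is determined by its length
   i <= |w|, and then y = drop (i + |u|) w. *)
Definition occ (u w : seq A) : nat :=
  count (fun i => take i w ++ u ++ drop (i + size u) w == w) (iota 0 (size w).+1).

Definition WMIX (ws : seq (seq A)) : pred (seq A) :=
  fun w => all (fun u => occ u w == occ (head [::] ws) w) ws.

Definition suff (n : nat) (w : seq A) : seq A := drop (size w - n) w.
End Words.

Section Graph.
Variables (V : eqType) (vert : pred V) (e : rel V).

Definition is_walk (x : seq V) : bool :=
  if x is v :: s then all vert x && path e v s else false.

Definition is_path (x : seq V) : bool := is_walk x && uniq x.

(* a cycle (v,v1,...,vn,v) : a loop (nonempty walk with source = target)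
   whose prefix (v,v1,...,vn) is a path *)
Definition is_cycle (x : seq V) : bool :=
  if x is v :: s then [&& is_walk x, s != [::], last v s == v & uniq (belast v s)]
  else false.

Definition dec_step (pG : seq V * seq (seq V)) (v' : V) : seq V * seq (seq V) :=
  let: (pi, G) := pG in
  if v' \notin pi then (rcons pi v', G)
  else let j := index v' pi in
       (take j.+1 pi, rcons G (rcons (drop j pi) v')).

Definition dec (w : seq V) : seq V * seq (seq V) :=
  if w is v :: s then foldl dec_step ([:: v], [::]) s else ([::], [::]).

(* multi-trace, as a function on P(G) u C(G) (value 0 outside) *)
Definition mtr (w : seq V) (x : seq V) : nat :=
  if is_path x then (x == (dec w).1 : nat)
  else if is_cycle x then count_mem x (dec w).2
  else 0.
End Graph.

Section DeBruijn.
Variables (A : finType) (N : nat).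

(* vertices of D_N : words of length N ; edges (a v, v b) *)
Definition dB_vert : pred (seq A) := fun x => size x == N.
Definition dB_edge : rel (seq A) :=
  fun x y => [&& size x == N, size y == N & behead x == take N.-1 y].

Definition walk (v w : seq A) : seq (seq A) :=
  v :: [seq suff N (v ++ take i w) | i <- iota 1 (size w)].

Definition mtrN (w : seq (seq A)) : seq (seq A) -> nat := mtr dB_vert dB_edge w.

Definition Mtr (L : pred (seq A)) (f : seq (seq A) -> nat) : Prop :=
  exists v u : seq A, size v = N /\ L (v ++ u) /\ f = mtrN (walk v u).
End DeBruijn.

(* For a word w with |w| >= N, the walk of w in the de Bruijn
   graph D_N is the sequence of its length-N factors ("windows").  The
   decomposition dec of a walk keeps a simple path and a list of cycles whose
   vertices, counted with multiplicity, are exactly the vertices of the walk,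
   and whose path ends where the walk ends.  Hence two walks with the same
   multi-trace visit the same multiset of vertices and end at the same vertex.
   An occurrence of a factor x with |x| <= N either starts a window or lies
   inside the last window, so |w|_x is a function of the multiset of windows
   and of the suffix of length N of w.  Two words of length >= N with the same
   multi-trace therefore have the same counts |w|_x for |x| <= N, and lie in
   the same WMIX languages for words of length <= N. *)
From mathcomp Require Import all_boot zify.
Set Implicit Arguments. Unset Strict Implicit. Unset Printing Implicit Defensive.

Lemma path_iota (T : Type) (r : rel T) (f : nat -> T) m n :
  (forall i, m <= i -> i < m + n -> r (f i) (f i.+1)) ->
  path r (f m) (map f (iota m.+1 n)).
Proof.
elim: n m => [|n IH] m H //=.
rewrite H ?addnS ?ltnS ?leq_addr //=.
by apply: IH => i mi ilt; apply: H; [exact: ltnW | rewrite addnS].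
Qed.

Lemma last_iota m n : last m (iota m.+1 n) = m + n.
Proof. by elim: n m => [|n IH] m /=; [rewrite addn0 | rewrite IH addnS]. Qed.

Lemma split_at_index (T : eqType) (x : T) (s : seq T) (j := index x s) :
  x \in s -> take j.+1 s = rcons (take j s) x /\ drop j s = x :: drop j.+1 s.
Proof.
move=> xs; have js : j < size s by rewrite index_mem.
by rewrite (take_nth x js) (drop_nth x js) nth_index.
Qed.

Section Decomposition.
Variables (V : eqType) (vert : pred V) (e : rel V).

Lemma path_neq_nil x : is_path vert e x -> x != [::].
Proof. by case: x. Qed.

Lemma walk_prefix s1 s2 :
  is_walk vert e (s1 ++ s2) -> s1 != [::] -> is_walk vert e s1.
Proof.
case: s1 => [|a t] //; rewrite /is_walk cat_cons -cat_cons all_cat cat_path.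
by case/andP => /andP[-> _] /andP[-> _].
Qed.

Lemma walk_suffix s1 s2 :
  is_walk vert e (s1 ++ s2) -> s2 != [::] -> is_walk vert e s2.
Proof.
case: s1 => [|a t] //; rewrite /is_walk cat_cons -cat_cons all_cat cat_path.
case/andP => /andP[_ al] /andP[_ pt].
by case: s2 al pt => [|b u] //= /andP[-> ->] /andP[_ ->].
Qed.

Lemma walk_rcons a t y : is_walk vert e (a :: t) -> vert y -> e (last a t) y ->
  is_walk vert e (a :: rcons t y).
Proof.
move=> /andP[al pt] vy ey; apply/andP; split.
  by rewrite -rcons_cons all_rcons vy al.
by rewrite rcons_path pt ey.
Qed.

(* The vertices accounted for by a pair (pi, Gamma): those of pi, and those
   of each cycle of Gamma with its (repeated) source dropped. *)
Definition dec_vertices (pG : seq V * seq (seq V)) : seq V :=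
  pG.1 ++ flatten (map behead pG.2).

Definition dec_inv (v : V) (s : seq V) (pG : seq V * seq (seq V)) : Prop :=
  [/\ is_path vert e pG.1, all (is_cycle vert e) pG.2,
      last v pG.1 = last v s & perm_eq (dec_vertices pG) (v :: s)].

Lemma dec_inv_extend v s x pi G :
  dec_inv v s (pi, G) -> vert x -> e (last v s) x -> x \notin pi ->
  dec_inv v (rcons s x) (rcons pi x, G).
Proof.
case=> /= pp ac lst pm vx ex xpi; split=> //=.
- case: pi pp lst xpi {pm} => [|a t] // pp lst xpi.
  have [wt ut] := andP pp.
  rewrite /is_path walk_rcons //=; last by move: ex; rewrite -lst.
  by change (uniq (rcons (a :: t) x)); rewrite rcons_uniq xpi.
- by rewrite !last_rcons.
- rewrite /dec_vertices /= -cats1 -catA -rcons_cons -cats1.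
  apply: (@perm_trans _ ((pi ++ flatten (map behead G)) ++ [:: x])).
    by rewrite -catA perm_cat2l perm_catC.
  by rewrite perm_cat2r.
Qed.

Lemma dec_inv_close v s x p1 p2 G :
  dec_inv v s (p1 ++ x :: p2, G) -> vert x -> e (last v s) x ->
  dec_inv v (rcons s x) (rcons p1 x, rcons G (x :: rcons p2 x)).
Proof.
case=> /= pp ac lst pm vx ex.
have wpi : is_walk vert e (rcons p1 x ++ p2) by rewrite cat_rcons; case/andP: pp.
have upi : uniq (p1 ++ x :: p2) by case/andP: pp.
split=> /=.
- apply/andP; split; first by apply: walk_prefix wpi _; case: (p1).
  by move: upi; rewrite -cat_rcons cat_uniq => /andP[].
- rewrite all_rcons ac andbT /is_cycle last_rcons belast_rcons eqxx.
  rewrite walk_rcons //=; last by move: lst; rewrite last_cat /= => ->.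
  + by move: upi; rewrite cat_uniq => /and3P[_ _ /= ->]; case: (p2).
  + by case/andP: pp => /(@walk_suffix p1 (x :: p2)) /(_ isT).
- by rewrite !last_rcons.
- apply: (@perm_trans _ ((dec_vertices (p1 ++ x :: p2, G)) ++ [:: x])); last first.
    by rewrite -rcons_cons -cats1 perm_cat2r.
  apply/permP => P; rewrite /dec_vertices map_rcons flatten_rcons /=.
  rewrite -!cats1 !count_cat /=; lia.
Qed.

Lemma dec_spec v s : is_walk vert e (v :: s) -> dec_inv v s (dec (v :: s)).
Proof.
elim/last_ind: s => [|s x IH].
  by case/andP=> /andP[hv _] _; split=> //; rewrite /is_path /is_walk /= hv.
rewrite /is_walk -rcons_cons all_rcons rcons_path.
case/andP=> /andP[vx av] /andP[pv ex].
have inv := IH (introT andP (conj av pv)).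
have -> : dec (v :: rcons s x) = dec_step (dec (v :: s)) x.
  by rewrite /dec /= foldl_rcons.
move: (dec (v :: s)) inv => [pi G] inv; rewrite /dec_step.
case: ifPn => [xpi | /negPn xpi]; first exact: dec_inv_extend.
have [-> ->] := split_at_index xpi.
apply: dec_inv_close => //.
by rewrite -(split_at_index xpi).2 cat_take_drop.
Qed.

(* A cycle repeats its source, so it is never a path: in a multi-trace the
   values on paths and on cycles do not interfere. *)
Lemma cycle_not_path c : is_cycle vert e c -> ~~ is_path vert e c.
Proof.
case: c => [|a t] //; case/and4P=> _ tn /eqP lt _.
rewrite /is_path negb_and; apply/orP; right.
case/lastP: t tn lt => [|t' y] // _; rewrite last_rcons => ->.
by rewrite /= mem_rcons mem_head.
Qed.

Lemma mtr_eq_dec w w' : is_walk vert e w -> is_walk vert e w' ->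
  mtr vert e w =1 mtr vert e w' ->
  (dec w).1 = (dec w').1 /\ perm_eq (dec w).2 (dec w').2.
Proof.
case: w => [|v s] //; case: w' => [|v' s'] // hw hw' H.
have [pp ac _ _] := dec_spec hw; have [_ ac' _ _] := dec_spec hw'.
split; first by have := H (dec (v :: s)).1; rewrite /mtr pp eqxx; case: eqP.
apply/allP => c _; apply/eqP.
have [hc | hc] := boolP (is_cycle vert e c).
  by have := H c; rewrite /mtr hc (negbTE (cycle_not_path hc)).
have no_c G : all (is_cycle vert e) G -> count_mem c G = 0.
  by move=> aG; apply/count_memPn/negP => /(allP aG); apply/negP.
by rewrite !no_c.
Qed.

Lemma mtr_eq_vertices w w' x0 : is_walk vert e w -> is_walk vert e w' ->
  mtr vert e w =1 mtr vert e w' -> perm_eq w w' /\ last x0 w = last x0 w'.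
Proof.
move=> hw hw' H; have [path_eq cycles_perm] := mtr_eq_dec hw hw' H.
case: w hw {H} path_eq cycles_perm => [|v s] //.
case: w' hw' => [|v' s'] // hw' hw path_eq cycles_perm.
have [pp _ lst pm] := dec_spec hw; have [_ _ lst' pm'] := dec_spec hw'.
split.
  rewrite perm_sym in pm; apply: perm_trans pm (perm_trans _ pm').
  by rewrite /dec_vertices path_eq perm_cat2l; apply/perm_flatten/perm_map.
rewrite /= -lst -lst' -path_eq.
by case: (dec (v :: s)).1 (path_neq_nil pp).
Qed.

End Decomposition.

Section DeBruijnWalks.
Variables (A : finType) (N : nat).
Hypothesis N_gt0 : 1 <= N.

Definition windows (w : seq A) : seq (seq A) :=
  [seq take N (drop j w) | j <- iota 0 (size w - N).+1].

Lemma walk_windows v u : size v = N -> walk N v u = windows (v ++ u).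
Proof.
move=> sv; rewrite /walk /windows size_cat sv addKn /= drop0 take_size_cat //.
congr (_ :: _); apply/eq_in_map => i; rewrite mem_iota add1n ltnS.
case/andP=> i1 iu; rewrite /suff size_cat size_takel // sv addKn.
by rewrite take_drop takeD (take_size_cat _ sv) (drop_size_cat _ sv).
Qed.

Lemma windows_walk w : N <= size w -> is_walk (dB_vert N) (dB_edge N) (windows w).
Proof.
move=> Nw; apply/andP; split.
  apply/allP => y /mapP[j]; rewrite mem_iota => /andP[_ jl] ->.
  by rewrite /dB_vert size_takel // size_drop; lia.
apply: (@path_iota _ (dB_edge N) (fun j => take N (drop j w))) => i _ il.
have {}il : i < size w - N by [].
rewrite /dB_edge !size_takel ?size_drop; try lia.
have behead_take s : drop 1 (take N s) = take N.-1 (drop 1 s).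
  by rewrite take_drop addn1 prednK.
by rewrite !eqxx /= -drop1 behead_take drop_drop add1n take_takel // leq_pred.
Qed.

Lemma last_windows x0 w : last x0 (windows w) = suff N w.
Proof.
rewrite /windows /= (last_map (fun j => take N (drop j w)) _ 0) last_iota.
by rewrite take_oversize // size_drop; lia.
Qed.

Lemma occ_prefix (x w : seq A) :
  occ x w = count (fun i => take (size x) (drop i w) == x) (iota 0 (size w).+1).
Proof.
apply: eq_in_count => i; rewrite mem_iota add0n ltnS => /andP[_ iw] /=.
rewrite -{3}(cat_take_drop i w) eqseq_cat // eqxx /= addnC -drop_drop.
apply/eqP/eqP => [<- | H]; first by rewrite take_size_cat.
by rewrite -{2}(cat_take_drop (size x) (drop i w)) H.
Qed.

Lemma occ_windows (x w : seq A) : size x <= N -> N <= size w ->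
  occ x w = count (fun y => take (size x) y == x) (windows w) +
            count (fun k => take (size x) (drop k (suff N w)) == x) (iota 1 N).
Proof.
move=> xN Nw; rewrite occ_prefix.
have -> : (size w).+1 = (size w - N).+1 + N by lia.
rewrite iotaD count_cat /windows count_map add0n -addn1 iotaDl count_map.
congr (_ + _); apply: eq_count => i /=; first by rewrite take_takel.
by rewrite drop_drop addnC.
Qed.

Lemma mtr_eq_occ (v u v' u' : seq A) : size v = N -> size v' = N ->
  mtrN N (walk N v u) =1 mtrN N (walk N v' u') ->
  forall x, size x <= N -> occ x (v ++ u) = occ x (v' ++ u').
Proof.
move=> sv sv'; rewrite !walk_windows // => H x xN.
have Nw : N <= size (v ++ u) by rewrite size_cat sv leq_addr.
have Nw' : N <= size (v' ++ u') by rewrite size_cat sv' leq_addr.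
have [windows_perm last_eq] :=
  mtr_eq_vertices [::] (windows_walk Nw) (windows_walk Nw') H.
rewrite (occ_windows xN Nw) (occ_windows xN Nw') (permP windows_perm).
by rewrite -(last_windows [::] (v ++ u)) last_eq last_windows.
Qed.

End DeBruijnWalks.

Lemma wmix_occ_eq (A : eqType) N (ws : seq (seq A)) w w' :
  (forall u, u \in ws -> size u <= N) ->
  (forall x, size x <= N -> occ x w = occ x w') -> WMIX ws w = WMIX ws w'.
Proof.
move=> ws_short H.
have head_eq : occ (head [::] ws) w = occ (head [::] ws) w'.
  case: ws ws_short => [|a l] ws_short; apply: H => //.
  by apply: ws_short; rewrite mem_head.
by apply: eq_in_all => u uin; rewrite /= H ?head_eq ?ws_short.
Qed.

Lemma Mtr_sub_wmix (A : finType) N (ws ws' : seq (seq A)) : 1 <= N ->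
  (forall u, u \in ws' -> size u <= N) ->
  (forall f, Mtr N (WMIX ws) f -> Mtr N (WMIX ws') f) ->
  forall w, N <= size w -> WMIX ws w -> WMIX ws' w.
Proof.
move=> N_gt0 ws'_short H w Nw Hw.
have sv : size (take N w) = N by rewrite size_takel.
have [v' [u' [sv' [Hw' ef]]]] : Mtr N (WMIX ws') (mtrN N (walk N (take N w) (drop N w))).
  by apply: H; exists (take N w), (drop N w); rewrite cat_take_drop.
rewrite -(cat_take_drop N w) (wmix_occ_eq (w' := v' ++ u') ws'_short) //.
by apply: mtr_eq_occ => //; rewrite ef.
Qed.

Theorem theorem2 (A : finType) (ws ws' : seq (seq A)) (N : nat)
  (HN : N = \max_(u <- ws ++ ws') size u) (HN1 : 1 <= N) :
  (forall w : seq A, WMIX ws w = WMIX ws' w) <->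
  ((forall w : seq A, size w < N -> WMIX ws w = WMIX ws' w) /\
   (forall f : seq (seq A) -> nat, Mtr N (WMIX ws) f <-> Mtr N (WMIX ws') f)).
Proof.
have all_short u : u \in ws ++ ws' -> size u <= N.
  by move=> uin; rewrite HN; apply: leq_bigmax_seq.
have ws_short u : u \in ws -> size u <= N.
  by move=> uin; apply: all_short; rewrite mem_cat uin.
have ws'_short u : u \in ws' -> size u <= N.
  by move=> uin; apply: all_short; rewrite mem_cat uin orbT.
split=> [same | [short_eq Mtr_eq] w].
  split=> // f; split=> -[v [u [sv [Hl ef]]]]; exists v, u.
    by rewrite -same.
  by rewrite same.
have [/short_eq // | Nw] := ltnP (size w) N.
by apply/idP/idP; apply: (@Mtr_sub_wmix _ N) => // f /Mtr_eq.
Qed.
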